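(* Let $G$ be the alternating group $A_4$ on $4$ elements (a group of order $12$). Then there do not exist subsets $A_1, A_2, A_3 \subseteq G$ with $\mathrm{card}(A_1)=2$, $\mathrm{card}(A_2)=3$, $\mathrm{card}(A_3)=2$ such that the multiplication map $A_1\times A_2\times A_3\to G$, $(a_1,a_2,a_3)\mapsto a_1a_2a_3$, is a bijection. *)

From mathcomp Require Import all_boot all_order all_fingroup all_solvable alt.
Set Implicit Arguments. Unset Strict Implicit. Unset Printing Implicit Defensive.

Definition A4 : {set {perm 'I_4}} := Alt ('I_4).

Definition mul3_bijective (gT : finGroupType) (G A1 A2 A3 : {set gT}) : Prop :=
  [/\ (forall a1 a2 a3, a1 \in A1 -> a2 \in A2 -> a3 \in A3 ->
         (a1 * a2 * a3)%g \in G),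
      (forall g, g \in G -> exists a1 a2 a3,
         [/\ a1 \in A1, a2 \in A2, a3 \in A3 & g = (a1 * a2 * a3)%g]) &
      (forall a1 a2 a3 b1 b2 b3,
         a1 \in A1 -> a2 \in A2 -> a3 \in A3 ->
         b1 \in A1 -> b2 \in A2 -> b3 \in A3 ->
         (a1 * a2 * a3)%g = (b1 * b2 * b3)%g ->
         [/\ a1 = b1, a2 = b2 & a3 = b3])].

From mathcomp Require Import all_boot all_order all_fingroup all_solvable alt.

(* Translating the outer factors we may assume A1 = {1, x} and A3 = {1, y}
   with x, y <> 1.  Then G is the disjoint union of C and xC for C = A2 A3, so
   x^2 C = C and x has even order; inverting the factorization, so has y.  In
   A4 the elements of even order are the three double transpositions, which
   are conjugate: y = x^g.  Writing g = u b v with u in {1, x}, b in A2 and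
   v in {1, y}, the factors u and v centralize x and y, so y = x^b, that is
   x b 1 = 1 b y, contradicting the uniqueness of the factorization. *)

Set Implicit Arguments.
Unset Strict Implicit.
Unset Printing Implicit Defensive.

Local Open Scope group_scope.

Section TripleFactorization.

Variables (gT : finGroupType) (G : {group gT}).
Implicit Types (B C : {set gT}) (p r x y z : gT).

Lemma lcoset_set2 x y z : x *: [set y; z] = [set x * y; x * z].
Proof. by rewrite -lcosetE /lcoset imsetU1 imset_set1. Qed.

Lemma rcoset_set2 x y z : [set y; z] :* x = [set y * x; z * x].
Proof. by rewrite -rcosetE /rcoset imsetU1 imset_set1. Qed.

Lemma invg_set2 x y : [set x; y]^-1 = [set x^-1; y^-1].
Proof. by apply/setP => z; rewrite !inE -!eqg_invLR. Qed.

Lemma mul3_bijective_translate (A1 A2 A3 : {set gT}) p r : p \in G -> r \in G ->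
  mul3_bijective G A1 A2 A3 -> mul3_bijective G (p *: A1) A2 (A3 :* r).
Proof.
move=> pG rG [inG onto inj].
have shift a1 a2 a3 : a1 * a2 * a3 = p * (p^-1 * a1 * a2 * (a3 * r^-1)) * r.
  by rewrite !mulgA mulgV mul1g mulgKV.
split.
- move=> a1 a2 a3; rewrite mem_lcoset mem_rcoset => a1A a2A a3A.
  by rewrite shift groupMr // groupMl // inG.
- move=> g gG; have g'G : p^-1 * g * r^-1 \in G by rewrite !groupM ?groupV.
  have [a1 [a2 [a3 [a1A a2A a3A eg]]]] := onto _ g'G.
  exists (p * a1), a2, (a3 * r); rewrite mem_lcoset mem_rcoset mulKg mulgK.
  by split=> //; rewrite shift mulKg mulgK -eg !mulgA mulgV mul1g mulgKV.
- move=> a1 a2 a3 b1 b2 b3; rewrite !mem_lcoset !mem_rcoset.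
  move=> a1A a2A a3A b1A b2A b3A eab.
  have eab' : p^-1 * a1 * a2 * (a3 * r^-1) = p^-1 * b1 * b2 * (b3 * r^-1).
    by apply: (mulgI p); apply: (mulIg r); rewrite -!shift.
  by have [/mulgI -> -> /mulIg ->] := inj _ _ _ _ _ _ a1A a2A a3A b1A b2A b3A eab'.
Qed.

Lemma mul3_bijectiveV (A1 A2 A3 : {set gT}) :
  mul3_bijective G A1 A2 A3 -> mul3_bijective G A3^-1 A2^-1 A1^-1.
Proof.
move=> [inG onto inj]; split.
- move=> a3 a2 a1; rewrite !inE => a3A a2A a1A.
  by rewrite -groupV !invMg mulgA inG.
- move=> g gG; have g'G : g^-1 \in G by rewrite groupV.
  have [a1 [a2 [a3 [a1A a2A a3A eg]]]] := onto _ g'G.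
  exists a3^-1, a2^-1, a1^-1; rewrite !inE !invgK.
  by split=> //; rewrite -[g]invgK eg !invMg mulgA.
- move=> a3 a2 a1 b3 b2 b1; rewrite !inE => a3A a2A a1A b3A b2A b1A eab.
  have eab' : a1^-1 * a2^-1 * a3^-1 = b1^-1 * b2^-1 * b3^-1.
    by rewrite -!invMg !mulgA eab.
  by have [/invg_inj -> /invg_inj -> /invg_inj ->] := inj _ _ _ _ _ _ a1A a2A a3A b1A b2A b3A eab'.
Qed.

Lemma even_order_of_lcoset_partition C x :
  C :|: x *: C = G -> [disjoint C & x *: C] -> ~~ odd #[x].
Proof.
move=> defG disC.
have memG c : (c \in G) = (c \in C) || (x^-1 * c \in C).
  by rewrite -defG inE mem_lcoset.
have CG c : c \in C -> c \in G by rewrite memG => ->.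
have xC c : c \in C -> x * c \notin C.
  by move=> Cc; rewrite (disjointFl disC) // mem_lcoset mulKg.
have [c0 Cc0 xG] : exists2 c0, c0 \in C & x \in G.
  have := group1 G; rewrite memG mulg1 => /orP[C1 | Cx].
    by exists 1; rewrite // memG mulVg C1 orbT.
  by exists x^-1; rewrite // -groupV CG.
have x2C c : c \in C -> x ^+ 2 * c \in C.
  move=> Cc; have := groupM (groupX 2 xG) (CG c Cc).
  by rewrite memG expgS expg1 -!mulgA mulKg (negPf (xC c Cc)) orbF.
have x2kC k c : c \in C -> x ^+ (2 * k) * c \in C.
  by elim: k => [|k IHk] Cc; rewrite ?mul1g // mulnS expgD -mulgA x2C ?IHk.
apply/negP => odd_x; have /negP[] := xC c0 Cc0.
have {1}<- : x ^+ (2 * (#[x].+1)./2) = x.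
  have even_x1 : (#[x].+1)./2.*2 = #[x].+1.
    by rewrite -{2}(odd_double_half #[x].+1) /= odd_x.
  by rewrite mul2n even_x1 expgS expg_order mulg1.
exact: x2kC.
Qed.

Lemma mul3_bijective_even_order A2 A3 x :
  mul3_bijective G [set 1; x] A2 A3 -> x != 1 -> ~~ odd #[x].
Proof.
move=> [inG onto inj] nx1; apply: (@even_order_of_lcoset_partition (A2 * A3)).
  apply/setP => g; rewrite inE mem_lcoset; apply/idP/idP.
    case/orP=> /mulsgP[a2 a3 a2A a3A e].
      by rewrite e -[a2]mul1g inG ?set21.
    by rewrite -(mulKVg x g) e mulgA inG ?set22.
  move=> /onto[a1 [a2 [a3 [/set2P[]-> a2A a3A ->]]]].
    by rewrite mul1g mem_mulg.
  by apply/orP; right; rewrite -mulgA mulKg mem_mulg.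
apply/pred0P => g /=; apply/negbTE/andP => -[/mulsgP[a2 a3 a2A a3A ->]].
rewrite mem_lcoset => /mulsgP[b2 b3 b2A b3A e].
have e' : 1 * a2 * a3 = x * b2 * b3 by rewrite mul1g -mulgA -e mulKVg.
have [x1 _ _] := inj _ _ _ _ _ _ (set21 _ _) a2A a3A (set22 _ _) b2A b3A e'.
by rewrite -x1 eqxx in nx1.
Qed.

Lemma mul3_bijective_not_conj B x y :
  mul3_bijective G [set 1; x] B [set 1; y] -> x != 1 -> y \notin x ^: G.
Proof.
move=> [_ onto inj] nx1; apply/imsetP => -[g /onto[u [b [v [uA bB vA ->]]]] yE].
have xu : x ^ u = x by case/set2P: uA => ->; rewrite ?conjg1 // conjgE mulKg.
have yv : y ^ v = y by case/set2P: vA => ->; rewrite ?conjg1 // conjgE mulKg.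
rewrite !conjgM xu in yE.
have xb : x ^ b = y by rewrite -(conjgK v (x ^ b)) -yE -{1}yv conjgK.
have e : x * b * 1 = 1 * b * y by rewrite mulg1 mul1g conjgC xb.
have [x1 _ _] := inj _ _ _ _ _ _ (set22 _ _) bB (set21 _ _) (set21 _ _) bB (set22 _ _) e.
by rewrite x1 eqxx in nx1.
Qed.

End TripleFactorization.

Definition o0 : 'I_4 := Ordinal (isT : 0 < 4).
Definition o1 : 'I_4 := Ordinal (isT : 1 < 4).
Definition o2 : 'I_4 := Ordinal (isT : 2 < 4).
Definition o3 : 'I_4 := Ordinal (isT : 3 < 4).

(* One-line notation; unlike {perm 'I_4}, whose constructions are locked, it
   computes, so that facts about the twelve elements of A4 can be decided by
   [vm_compute]. *)
Definition perm_code (s : {perm 'I_4}) : seq nat :=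
  [seq val (s i) | i <- [:: o0; o1; o2; o3]].

Definition code_mul (u v : seq nat) : seq nat := [seq nth 0 v k | k <- u].
Arguments perm_code : simpl never.
Arguments code_mul : simpl never.

Lemma nth_perm_code s (i : 'I_4) : nth 0 (perm_code s) i = s i.
Proof. by case: i => [[|[|[|[|//]]]] lti]; congr (val (s _)); apply: val_inj. Qed.

Lemma perm_code_inj : injective perm_code.
Proof. by move=> s t est; apply/permP => i; apply: ord_inj; rewrite -!nth_perm_code est. Qed.

Lemma perm_codeM s t : perm_code (s * t) = code_mul (perm_code s) (perm_code t).
Proof. by rewrite /code_mul -map_comp; apply: eq_map => i /=; rewrite permM nth_perm_code. Qed.

Lemma perm_code1 : perm_code 1 = [:: 0; 1; 2; 3]%N.
Proof. by rewrite /perm_code /= !perm1. Qed.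

Definition A4_elements : seq {perm 'I_4} :=
  [:: 1; tperm o0 o1 * tperm o2 o3; tperm o0 o2 * tperm o1 o3; tperm o0 o3 * tperm o1 o2;
      tperm o0 o1 * tperm o1 o2; tperm o0 o2 * tperm o2 o1; tperm o0 o1 * tperm o1 o3;
      tperm o0 o3 * tperm o3 o1; tperm o0 o2 * tperm o2 o3; tperm o0 o3 * tperm o3 o2;
      tperm o1 o2 * tperm o2 o3; tperm o1 o3 * tperm o3 o2].

Lemma A4_codesE : map perm_code A4_elements =
  [:: [:: 0; 1; 2; 3]; [:: 1; 0; 3; 2]; [:: 2; 3; 0; 1]; [:: 3; 2; 1; 0];
      [:: 2; 0; 1; 3]; [:: 1; 2; 0; 3]; [:: 3; 0; 2; 1]; [:: 1; 3; 2; 0];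
      [:: 3; 1; 0; 2]; [:: 2; 1; 3; 0]; [:: 0; 3; 1; 2]; [:: 0; 2; 3; 1]]%N.
Proof. by rewrite /= perm_code1 !perm_codeM /perm_code /= !permE; vm_compute. Qed.

Lemma card_A4 : #|A4| = 12.
Proof. by apply/eqP; rewrite -(eqn_pmul2l (isT : 0 < 2)) card_Alt card_ord. Qed.

Lemma mem_A4_elements : A4_elements =i A4.
Proof.
have uniqA4 : uniq A4_elements by rewrite -(map_inj_uniq perm_code_inj) A4_codesE.
apply/subset_cardP; first by rewrite card_A4 (card_uniqP uniqA4).
by apply/subsetP/allP; rewrite /= /A4 !Alt_even !odd_permM !odd_tperm odd_perm1.
Qed.

Definition conj_class_check (cs : seq (seq nat)) : bool :=
  all (fun u => all (fun v =>
    [|| code_mul u (code_mul u u) == [:: 0; 1; 2; 3]%N,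
        code_mul v (code_mul v v) == [:: 0; 1; 2; 3]%N
      | has (fun w => code_mul w v == code_mul u w) cs]) cs) cs.

Lemma A4_even_order_conj x y :
  x \in A4 -> y \in A4 -> ~~ odd #[x] -> ~~ odd #[y] -> y \in x ^: A4.
Proof.
have cube_neq1 z : ~~ odd #[z] -> z * (z * z) != 1.
  have -> : z * (z * z) = z ^+ 3 by rewrite !expgS expg0 mulg1.
  by apply: contra; rewrite -order_dvdn => /dvdn_odd->.
rewrite -!mem_A4_elements => xA yA /cube_neq1 x3 /cube_neq1 y3.
have : conj_class_check (map perm_code A4_elements).
  by rewrite A4_codesE; vm_compute.
move=> /allP/(_ _ (map_f _ xA))/allP/(_ _ (map_f _ yA)).
rewrite -perm_code1 -!perm_codeM !(inj_eq perm_code_inj) (negPf x3) (negPf y3) has_map.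
case/hasP=> c cA /=; rewrite -!perm_codeM (inj_eq perm_code_inj) => /eqP cy_xc.
by rewrite -[y](mulKg c) cy_xc -conjgE memJ_class -?mem_A4_elements.
Qed.

Theorem proposition1p3 :
  ~ exists A1 A2 A3 : {set {perm 'I_4}},
      [/\ [/\ A1 \subset A4, A2 \subset A4 & A3 \subset A4],
          [/\ #|A1| = 2, #|A2| = 3 & #|A3| = 2] &
          mul3_bijective A4 A1 A2 A3].
Proof.
case=> A1 [A2 [A3 [[sA1 _ sA3] [/eqP/cards2P[p [q [npq defA1]]] _]]]].
move=> /eqP/cards2P[r [s [nrs defA3]]] fact.
have [pA qA] : p \in A4 /\ q \in A4 by rewrite !(subsetP sA1) // defA1 ?set21 ?set22.
have [rA sA] : r \in A4 /\ s \in A4 by rewrite !(subsetP sA3) // defA3 ?set21 ?set22.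
set x := p^-1 * q; set y := s * r^-1.
have nx1 : x != 1 by rewrite -eq_mulVg1.
have ny1 : y^-1 != 1 by rewrite invg_eq1 -eq_mulgV1 eq_sym.
have fact1 : mul3_bijective A4 [set 1; x] A2 [set 1; y].
  have := mul3_bijective_translate (groupVr pA) (groupVr rA) fact.
  by rewrite defA1 defA3 lcoset_set2 rcoset_set2 mulVg mulgV.
have ox := mul3_bijective_even_order fact1 nx1.
have oy : ~~ odd #[y].
  have := mul3_bijectiveV fact1; rewrite !invg_set2 invg1 -orderV.
  by move/mul3_bijective_even_order/(_ ny1).
have := mul3_bijective_not_conj fact1 nx1.
by rewrite (A4_even_order_conj _ _ ox oy) ?groupM ?groupV.
Qed.
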